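(* In the standing setup, let $T$ be a valid partial table and let $(i,b)$ be a position with $T(i,b)=\emptyset$. Then either there exists $x\in B_{i,b}$ such that both $S_i+x$ and $C_b+x$ are independent, or there are at least $n-|C_b|$ columns $c$ that are $(i,b)$-swappable.
   Context: Standing setup: $M$ is a matroid of rank $n$ on ground set $E$; $f\le n$ is a positive integer; for each $i\in\{1,\dots,f\}$ and $j\in\{1,\dots,n\}$, $B_{i,j}$ is a basis of $M$, and the sets $B_{i,j}$ are pairwise disjoint. A valid partial table $T$ assigns to each position $(i,j)\in[f]\times[n]$ either the symbol $\emptyset$ (the position is empty) or an element $T(i,j)\in B_{i,j}$, such that for every row $i$ the set $S_i=\{T(i,j):T(i,j)\ne\emptyset\}$ is independent and for every column $j$ the set $C_j=\{T(i,j):T(i,j)\neq\emptyset\}$ is independent. Notation: for a set $A$ and an element $z$, ''$A+z$ is independent'' means $z\notin A$ and $A\cup\{z\}$ is independent; $A-z$ denotes $A\setminus\{z\}$ for $z\in A$; expressions such as $A-z+w$ are read left to right with the same convention. Definition: given $T(i,b)=\emptyset$, a column $c$ with $T(i,c)=x'\neq\emptyset$ is $(i,b)$-swappable if there is $y\in B_{i,b}$ such that $C_b+y$ and $S_i-x'+y$ are independent; such $y$ is called a witness for the $(i,b)$-swappability of $c$. *)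

From mathcomp Require Import all_boot.
Set Implicit Arguments. Unset Strict Implicit. Unset Printing Implicit Defensive.

Section Matroid.
Variable E : finType.
Variable indep : {set E} -> bool.

Definition is_matroid : Prop :=
  [/\ indep set0,
      (forall A B : {set E}, A \subset B -> indep B -> indep A) &
      (forall A B : {set E}, indep A -> indep B -> #|A| < #|B| ->
         exists2 x, x \in B :\: A & indep (x |: A))].

Definition is_basis (B : {set E}) : Prop :=
  indep B /\ forall x, x \notin B -> ~~ indep (x |: B).

Definition has_rank (n : nat) : Prop :=
  forall B, is_basis B -> #|B| = n.

Definition indep_add (A : {set E}) (z : E) : bool :=
  (z \notin A) && indep (z |: A).
End Matroid.

Section Table.
Variables (E : finType) (f n : nat).
Variable indep : {set E} -> bool.
Variable B : 'I_f -> 'I_n -> {set E}.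
(* A partial table: None = empty position. *)
Variable T : 'I_f -> 'I_n -> option E.

Definition row_set (i : 'I_f) : {set E} := [set x | [exists j, T i j == Some x]].
Definition col_set (j : 'I_n) : {set E} := [set x | [exists i, T i j == Some x]].

Definition valid_table : Prop :=
  [/\ (forall i j x, T i j = Some x -> x \in B i j),
      (forall i, indep (row_set i)) &
      (forall j, indep (col_set j))].

Definition swappable (i : 'I_f) (b c : 'I_n) : bool :=
  if T i c is Some x' then
    [exists y in B i b,
       indep_add indep (col_set b) y && indep_add indep (row_set i :\ x') y]
  else false.
End Table.

(* Suppose no element of B(i,b) can be added to both S_i and C_b.  Extending
   C_b inside C_b ∪ B(i,b) to a set of size n yields a set Y ⊆ B(i,b) of at
   least n - |C_b| elements, each addable to C_b and hence not addable to S_i.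
   For every y ∈ Y the set S_i + y therefore contains a circuit through y, and
   a counting argument with the augmentation axiom shows that at least |Y|
   elements x' of S_i admit an exchange S_i - x' + y with some y ∈ Y.  The
   columns holding these x' are distinct and (i,b)-swappable. *)
From mathcomp Require Import all_boot.
From mathcomp Require Import zify.
Set Implicit Arguments. Unset Strict Implicit. Unset Printing Implicit Defensive.

Section MatroidExchange.
Variables (E : finType) (indep : {set E} -> bool).
Hypothesis matroid_indep : is_matroid indep.

Lemma indep_subset (A D : {set E}) : A \subset D -> indep D -> indep A.
Proof. by case: matroid_indep => _ + _; apply. Qed.

Lemma indep_extend (A D : {set E}) : indep A -> indep D ->
  exists I, [/\ indep I, A \subset I, I \subset A :|: D & #|D| <= #|I|].
Proof.
case: matroid_indep => _ _ augment.
have [k] := ubnP (#|D| - #|A|); elim: k A => // k IH A ltDA indA indD.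
have [leDA | ltAD] := leqP #|D| #|A|.
  by exists A; split; rewrite ?subsetUl.
have [x /setDP [xD xA] indxA] := augment A D indA indD ltAD.
have cardxA : #|x |: A| = #|A|.+1 by rewrite cardsU1 xA.
have [I [indI sxAI sIxAD leDI]] := IH (x |: A) ltac:(lia) indxA indD.
exists I; split => //; first exact: subset_trans (subsetU1 x A) sxAI.
apply: subset_trans sIxAD _; rewrite -setUA subUset subxx andbT.
by rewrite sub1set !inE xD orbT.
Qed.

Lemma exists_indep_add_set (A D : {set E}) : indep A -> indep D ->
  exists2 Y : {set E}, Y \subset D &
    #|D| - #|A| <= #|Y| /\ {in Y, forall y, indep_add indep A y}.
Proof.
move=> indA indD; have [I [indI sAI sIAD leDI]] := indep_extend indA indD.
exists (I :\: A); last split.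
- apply/subsetP => y /setDP [yI yA].
  by have := subsetP sIAD y yI; rewrite inE (negbTE yA).
- by have := cardsID A I; rewrite (setIidPr sAI); lia.
- move=> y /setDP [yI yA]; rewrite /indep_add yA; apply: indep_subset indI.
  by rewrite subUset sub1set yI.
Qed.

Lemma dep_setU1_notin (S : {set E}) (y : E) :
  indep S -> ~~ indep (y |: S) -> y \notin S.
Proof. by move=> indS; apply: contra => yS; rewrite (setUidPr _) ?sub1set. Qed.

(* If S + y is dependent, it contains a circuit through y; a part X of S that
   stays independent together with y misses an element x of that circuit. *)
Lemma exchange_outside (S X : {set E}) (y : E) :
  indep S -> X \subset S -> indep (y |: X) -> ~~ indep (y |: S) ->
  exists2 x, x \in S :\: X & indep (y |: (S :\ x)).
Proof.
move=> indS sXS indyX depyS.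
have [J [indJ syXJ sJ leSJ]] := indep_extend indyX indS.
have sJyS : J \subset y |: S.
  by apply: subset_trans sJ _; rewrite -setUA setUS // subUset sXS subxx.
have yJ : y \in J by rewrite (subsetP syXJ) ?setU11.
have /subsetPn [x xyS xJ] : ~~ (y |: S \subset J).
  apply: contra depyS => syS_J.
  by have /eqP <- : J == y |: S by rewrite eqEsubset sJyS.
have xy : x != y by apply: contraNneq xJ => ->.
have xS : x \in S by move: xyS; rewrite in_setU1 (negbTE xy).
exists x.
  rewrite inE xS andbT; apply: contraNN xJ => xX.
  by rewrite (subsetP syXJ) // !inE xX orbT.
suff -> : y |: (S :\ x) = J by [].
apply/esym/eqP; rewrite eqEcard; apply/andP; split.
  apply/subsetP => z zJ; rewrite !inE.
  have := subsetP sJyS z zJ; rewrite in_setU1 => /orP [-> // | zS].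
  by rewrite zS andbT; apply/orP; right; apply: contraNneq xJ => <-.
rewrite cardsU1 in_setD1 (negbTE (dep_setU1_notin indS depyS)) andbF add1n.
by move: leSJ; rewrite (cardsD1 x S) xS.
Qed.

Lemma card_exchangeable (S Y : {set E}) :
  indep S -> indep Y -> {in Y, forall y, ~~ indep (y |: S)} ->
  #|Y| <= #|[set x in S | [exists y in Y, indep_add indep (S :\ x) y]]|.
Proof.
case: matroid_indep => _ _ augment indS indY depYS.
set X := [set x in S | _]; rewrite leqNgt; apply/negP => ltXY.
have sXS : X \subset S by apply/subsetP => x; rewrite inE => /andP [].
have [y /setDP [yY _] indyX] := augment X Y (indep_subset sXS indS) indY ltXY.
have [x /setDP [xS xX] indySx] := exchange_outside indS sXS indyX (depYS y yY).
have yS := dep_setU1_notin indS (depYS y yY).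
move/negP: xX; apply; rewrite inE xS; apply/exists_inP; exists y => //.
by rewrite /indep_add indySx in_setD1 (negbTE yS) andbF.
Qed.

End MatroidExchange.

Section TableColumns.
Variables (E : finType) (f n : nat).
Variable B : 'I_f -> 'I_n -> {set E}.
Variable T : 'I_f -> 'I_n -> option E.

Lemma basis_notin_row (i : 'I_f) (b : 'I_n) (x : E) :
  (forall i j y, T i j = Some y -> y \in B i j) ->
  (forall i1 j1 i2 j2, (i1, j1) != (i2, j2) -> [disjoint B i1 j1 & B i2 j2]) ->
  T i b = None -> x \in B i b -> x \notin row_set T i.
Proof.
move=> TB disjB Tib xB; rewrite inE; apply/existsP => -[c /eqP Tic].
have cb : (i, b) != (i, c).
  by apply/eqP => -[bc]; move: Tic; rewrite -bc Tib.
by have /disjointFr/(_ xB) := disjB _ _ _ _ cb; rewrite (TB _ _ _ Tic).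
Qed.

Lemma card_row_subset_columns (i : 'I_f) (X : {set E}) :
  X \subset row_set T i ->
  #|X| <= #|[set c | [exists x in X, T i c == Some x]]|.
Proof.
move=> sXrow; rewrite -(card_imset _ (@Some_inj _)).
apply: leq_trans (leq_imset_card (T i) _); apply: subset_leq_card.
apply/subsetP => _ /imsetP [x xX ->].
have := subsetP sXrow x xX; rewrite inE => /existsP [c /eqP Tic].
by apply/imsetP; exists c; rewrite // inE; apply/exists_inP; exists x; rewrite ?Tic.
Qed.

End TableColumns.

Theorem mainTheorem3 (E : finType) (indep : {set E} -> bool) (n f : nat)
  (B : 'I_f -> 'I_n -> {set E}) (T : 'I_f -> 'I_n -> option E)
  (i : 'I_f) (b : 'I_n) :
  is_matroid indep -> has_rank indep n ->
  0 < f -> f <= n ->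
  (forall i' j', is_basis indep (B i' j')) ->
  (forall i1 j1 i2 j2, (i1, j1) != (i2, j2) -> [disjoint B i1 j1 & B i2 j2]) ->
  valid_table indep B T ->
  T i b = None ->
  (exists2 x, x \in B i b &
     indep_add indep (row_set T i) x /\ indep_add indep (col_set T b) x)
  \/ n - #|col_set T b| <= #|[set c | swappable indep B T i b c]|.
Proof.
move=> hM rankM _ _ basisB disjB [TB indS indC] Tib.
set S := row_set T i; set C := col_set T b.
have [/exists_inP [x xB /andP [addS addC]] | noboth] :=
  boolP [exists x in B i b, indep_add indep S x && indep_add indep C x].
  by left; exists x.
right; have [indB _] := basisB i b.
have [Y sYB [cardY addCY]] := exists_indep_add_set hM (indC b) indB.
have depYS : {in Y, forall y, ~~ indep (y |: S)}.
  move=> y yY; have yB := subsetP sYB y yY.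
  move/exists_inPn/(_ y yB): noboth; rewrite addCY // andbT.
  by rewrite /indep_add (basis_notin_row TB disjB Tib yB).
set X := [set x in S | [exists y in Y, indep_add indep (S :\ x) y]].
have leYX : #|Y| <= #|X|.
  by have := card_exchangeable hM (indS i) (indep_subset hM sYB indB) depYS.
have sXS : X \subset S by apply/subsetP => x; rewrite inE => /andP [].
have leXCs := card_row_subset_columns sXS.
rewrite (rankM _ (basisB i b)) -/C in cardY; set Cs := [set c | _] in leXCs.
suff /subset_leq_card : Cs \subset [set c | swappable indep B T i b c] by lia.
apply/subsetP => c; rewrite !inE /swappable => /exists_inP [x xX /eqP ->].
move: xX; rewrite inE => /andP [_ /exists_inP [y yY addSy]].
by apply/exists_inP; exists y; rewrite ?(subsetP sYB) ?addCY.
Qed.
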